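(* In the setting described in the context, suppose $K\in\mathbb{R}^{m\times n}$ and a symmetric $P\in\mathbb{R}^{n\times n}$ with $P>0$ satisfy $P-(A+BK)P(A+BK)^\top>0$ for all $(A,B)\in\Sigma$. Then $\operatorname{im}\begin{bmatrix} I\\ K\end{bmatrix}\subseteq\operatorname{im}\begin{bmatrix} X_-\\ U_-\end{bmatrix}$.
   Context: Consider the system $x(t+1)=A_sx(t)+B_su(t)+w(t)$ with unknown $A_s\in\mathbb{R}^{n\times n}$, $B_s\in\mathbb{R}^{n\times m}$ and unknown noise $w$. Data: $X_+=[x(1)\ \cdots\ x(T)]$, $X_-=[x(0)\ \cdots\ x(T-1)]$, $U_-=[u(0)\ \cdots\ u(T-1)]$, with $X_+=A_sX_-+B_sU_-+W_-$ where $W_-=[w(0)\ \cdots\ w(T-1)]$ satisfies $\begin{bmatrix} I\\ W_-^\top\end{bmatrix}^\top\begin{bmatrix}\Phi_{11} & \Phi_{12}\\ \Phi_{12}^\top & \Phi_{22}\end{bmatrix}\begin{bmatrix} I\\ W_-^\top\end{bmatrix}\ge0$ for known $\Phi_{11}=\Phi_{11}^\top\in\mathbb{R}^{n\times n}$, $\Phi_{12}\in\mathbb{R}^{n\times T}$, $\Phi_{22}=\Phi_{22}^\top\in\mathbb{R}^{T\times T}$, $\Phi_{22}<0$. $\Sigma$ is the set of all $(A,B)\in\mathbb{R}^{n\times n}\times\mathbb{R}^{n\times m}$ such that $X_+=AX_-+BU_-+W$ for some $W\in\mathbb{R}^{n\times T}$ satisfying the same noise inequality (so $(A_s,B_s)\in\Sigma$).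 *)

From HB Require Import structures.
From mathcomp Require Import all_boot all_order all_algebra.
From mathcomp Require Import reals.
Set Implicit Arguments. Unset Strict Implicit. Unset Printing Implicit Defensive.
Import Order.TTheory GRing.Theory Num.Theory.
Local Open Scope ring_scope.

Definition psd (R : realType) (k : nat) (M : 'M[R]_k) : Prop :=
  M^T = M /\ forall x : 'cV[R]_k, 0 <= (x^T *m M *m x) 0 0.

Definition pd (R : realType) (k : nat) (M : 'M[R]_k) : Prop :=
  M^T = M /\ forall x : 'cV[R]_k, x != 0 -> 0 < (x^T *m M *m x) 0 0.

Definition nd (R : realType) (k : nat) (M : 'M[R]_k) : Prop := pd (- M).

Definition noise_ok (R : realType) (n T : nat)
  (Phi11 : 'M[R]_n) (Phi12 : 'M[R]_(n, T)) (Phi22 : 'M[R]_T)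
  (W : 'M[R]_(n, T)) : Prop :=
  psd ((col_mx (1%:M : 'M[R]_n) W^T)^T
        *m block_mx Phi11 Phi12 Phi12^T Phi22
        *m col_mx (1%:M : 'M[R]_n) W^T).

Definition in_Sigma (R : realType) (n m T : nat)
  (Xp Xm : 'M[R]_(n, T)) (Um : 'M[R]_(m, T))
  (Phi11 : 'M[R]_n) (Phi12 : 'M[R]_(n, T)) (Phi22 : 'M[R]_T)
  (A : 'M[R]_n) (B : 'M[R]_(n, m)) : Prop :=
  exists W : 'M[R]_(n, T), Xp = A *m Xm + B *m Um + W /\ noise_ok Phi11 Phi12 Phi22 W.

From HB Require Import structures.
From mathcomp Require Import all_boot all_order all_algebra.
From mathcomp Require Import reals.
From mathcomp Require Import ring lra.
Import Order.TTheory GRing.Theory Num.Theory.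
Local Open Scope ring_scope.

(* Write X = [I; K] and Y = [X_-; U_-].  If im X were not
   contained in im Y, there would be a vector v = [vx; vu] with
   Y^T v = 0 but d := X^T v <> 0.  Shifting the true system along the
   direction v, i.e. taking (A, B) = (A_s + t y vx^T, B_s + t y vu^T) for a
   fixed unit vector y and any real t, does not change the residual
   X_+ - A X_- - B U_- (because Y^T v = 0), so every such pair lies in Sigma.
   Its closed loop is A_s + B_s K + t y d^T, and the quadratic form of
   P - (A + B K) P (A + B K)^T at y equals
       y^T P y - (b + t d)^T P (b + t d),    b := (A_s + B_s K)^T y,
   a quadratic in t with leading coefficient -d^T P d < 0.  It cannot stay
   positive for all t, contradicting the robust Lyapunov hypothesis. *)

Definition qform {R : pzRingType} {k : nat} (x : 'cV[R]_k) (M : 'M[R]_k) : R :=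
  (x^T *m M *m x) 0 0.

Lemma quadratic_unbounded {R : realFieldType} {a be g q : R} :
  0 < q -> ~ (forall t, be + t * g + t ^+ 2 * q < a).
Proof.
move=> hq Hbound.
have ha : be < a by move: (Hbound 0); rewrite mul0r expr0n /= mul0r !addr0.
pose t := (a - be) / q + 1.
have htq : t * q = (a - be) + q by rewrite /t mulrDl mulfVK ?mul1r // gt_eqF.
have ht1 : 1 <= t by rewrite /t lerDr divr_ge0 ?subr_ge0 ?ltW.
have := Hbound t; have := Hbound (- t); rewrite !expr2; nra.
Qed.

Lemma qform_line (R : comPzRingType) (k : nat) (b d : 'cV[R]_k) (P : 'M[R]_k) (t : R) :
  qform (b + t *: d) P =
  qform b P + t * ((b^T *m P *m d) 0 0 + (d^T *m P *m b) 0 0) + t ^+ 2 * qform d P.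
Proof.
rewrite /qform [(_ + _)^T]linearD /= [(_ *: _)^T]linearZ /= !mulmxDl !mulmxDr -!scalemxAl -!scalemxAr.
move: (b^T *m P *m b) (b^T *m P *m d) (d^T *m P *m b) (d^T *m P *m d) => bb bd db dd.
by rewrite !mxE; ring.
Qed.

Lemma qform_lyapunov (R : comPzRingType) (k : nat) (y : 'cV[R]_k) (P N : 'M[R]_k) :
  qform y (P - N *m P *m N^T) = qform y P - qform (N^T *m y) P.
Proof.
rewrite /qform mulmxBr mulmxBl trmx_mul trmxK !mulmxA.
by move: (y^T *m P *m y) (y^T *m N *m P *m N^T *m y) => u w; rewrite !mxE.
Qed.

Lemma lyapunov_fails_on_line {R : realType} {k : nat} (P M : 'M[R]_k) (y d : 'cV[R]_k) :
  pd P -> y^T *m y = 1%:M -> d != 0 ->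
  ~ (forall t : R, 0 < qform y (P - (M + t *: (y *m d^T)) *m P *m (M + t *: (y *m d^T))^T)).
Proof.
move=> [_ HP] yTy dnz Hline; set b := M^T *m y.
have shift t : (M + t *: (y *m d^T))^T *m y = b + t *: d.
  by rewrite linearD /= linearZ /= trmx_mul trmxK mulmxDl -scalemxAl -mulmxA yTy mulmx1.
pose g := (b^T *m P *m d) 0 0 + (d^T *m P *m b) 0 0.
apply: (@quadratic_unbounded _ (qform y P) (qform b P) g _ (HP d dnz)) => t.
by rewrite /g -qform_line -shift -subr_gt0 -qform_lyapunov.
Qed.

Lemma not_submx_separating (F : fieldType) (p q k : nat) (A : 'M[F]_(p, k)) (B : 'M[F]_(q, k)) :
  ~~ (A <= B)%MS -> exists v : 'cV[F]_k, B *m v = 0 /\ A *m v != 0.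
Proof.
rewrite submxE => /matrix0Pn [i [j Hij]].
exists (cokermx B *m delta_mx j 0); split; first by rewrite mulmxA mulmx_coker mul0mx.
apply/matrix0Pn; exists i, 0; by rewrite mulmxA -colE mxE.
Qed.

Lemma in_Sigma_shift (R : realType) (n m T : nat) (Xp Xm : 'M[R]_(n, T)) (Um : 'M[R]_(m, T))
    (Phi11 : 'M[R]_n) (Phi12 : 'M[R]_(n, T)) (Phi22 : 'M[R]_T)
    (A dA : 'M[R]_n) (B dB : 'M[R]_(n, m)) :
  in_Sigma Xp Xm Um Phi11 Phi12 Phi22 A B -> dA *m Xm + dB *m Um = 0 ->
  in_Sigma Xp Xm Um Phi11 Phi12 Phi22 (A + dA) (B + dB).
Proof.
move=> [W [HXp HW]] Hd; exists W; split => //.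
by rewrite HXp !mulmxDl addrACA Hd addr0.
Qed.

Lemma delta_gram {R : pzSemiRingType} {k : nat} (j : 'I_k) :
  (delta_mx j 0 : 'cV[R]_k)^T *m delta_mx j 0 = 1%:M.
Proof. by rewrite trmx_delta mul_delta_mx; apply/matrixP => a b; rewrite !mxE !ord1. Qed.

Theorem mainTheorem12 (R : realType) (n m T : nat)
  (Xp Xm : 'M[R]_(n, T)) (Um : 'M[R]_(m, T))
  (Phi11 : 'M[R]_n) (Phi12 : 'M[R]_(n, T)) (Phi22 : 'M[R]_T)
  (As : 'M[R]_n) (Bs : 'M[R]_(n, m)) (Wm : 'M[R]_(n, T))
  (K : 'M[R]_(m, n)) (P : 'M[R]_n) :
  Phi11^T = Phi11 -> Phi22^T = Phi22 -> nd Phi22 ->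
  Xp = As *m Xm + Bs *m Um + Wm -> noise_ok Phi11 Phi12 Phi22 Wm ->
  P^T = P -> pd P ->
  (forall (A : 'M[R]_n) (B : 'M[R]_(n, m)),
      in_Sigma Xp Xm Um Phi11 Phi12 Phi22 A B ->
      pd (P - (A + B *m K) *m P *m (A + B *m K)^T)) ->
  (* im [I; K] \subseteq im [X_-; U_-]  (column spaces, via row spaces of transposes) *)
  ((col_mx (1%:M : 'M[R]_n) K)^T <= (col_mx Xm Um)^T)%MS.
Proof.
move=> _ _ _ HXp Hnoise _ HP Hrob; apply/negPn/negP.
move=> /not_submx_separating [v [Yv Xv]].
have /matrix0Pn [j _] := Xv; set y : 'cV[R]_n := delta_mx j 0.
have ynz : y != 0 by apply/matrix0Pn; exists j, 0; rewrite mxE !eqxx oner_neq0.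
set vx := usubmx v; set vu := dsubmx v.
have vanish_on_data : vx^T *m Xm + vu^T *m Um = 0.
  have := congr1 trmx Yv; rewrite -[v]vsubmxK tr_col_mx mul_row_col trmx0.
  by rewrite linearD /= !trmx_mul !trmxK.
set d := vx + K^T *m vu.
have Xd : (col_mx 1%:M K)^T *m v = d.
  by rewrite -[v]vsubmxK tr_col_mx mul_row_col trmx1 mul1mx.
apply: (lyapunov_fails_on_line P (As + Bs *m K) y d HP (delta_gram j)); first by rewrite -Xd.
move=> t; pose dA := t *: (y *m vx^T); pose dB := t *: (y *m vu^T).
have shifted : in_Sigma Xp Xm Um Phi11 Phi12 Phi22 (As + dA) (Bs + dB).
  apply: in_Sigma_shift; first by exists Wm.
  by rewrite -!scalemxAl -scalerDr -!mulmxA -mulmxDr vanish_on_data mulmx0 scaler0.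
have closed_loop : As + dA + (Bs + dB) *m K = As + Bs *m K + t *: (y *m d^T).
  rewrite mulmxDl addrACA -scalemxAl -scalerDr -mulmxA -mulmxDr.
  by rewrite /d [(vx + _)^T]linearD /= trmx_mul trmxK.
by have [_ /(_ y ynz)] := Hrob _ _ shifted; rewrite closed_loop.
Qed.
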